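(* Let $(D=(V,A),c,r,K)$ be an instance of the node-weighted Directed Steiner Tree problem, $n=|V|$, and let $(x,f)$ be a feasible solution of (LP-DST). Let $S=\{v\in V:x_v>0\}$, $U=\{v\in V:x_v\ge1/\sqrt n\}$, $U'=S\setminus U$, and let $EX$ be the set of terminals $t\in K$ for which there is no directed path from $r$ to $t$ in $D[U]$. For $t\in EX$ let $X_t$ be the set of vertices $w\in U'$ such that there is a directed path from $w$ to $t$ in $D[U\cup\{w\}]$. Then $|X_t|\ge\sqrt n$ for every $t\in EX$.
   Context: For $v\in V$, $\mathcal P_v$ denotes the set of simple directed paths in $D$ from $r$ to $v$. (LP-DST) has variables $x_v$ ($v\in V$) and $f^t_P$ ($t\in K$, $P\in\mathcal P_t$) and constraints: $\sum_{P\in\mathcal P_t}f^t_P=1$ for all $t\in K$; $\sum_{P\in\mathcal P_t: v\in P}f^t_P\le x_v$ for all $v\in V$, $t\in K$; $0\le x_v\le 1$; $0\le f^t_P\le 1$ (objective: minimize $\sum_v x_vc(v)$). $D[W]$ is the subgraph induced by $W$. *)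

From HB Require Import structures.
From mathcomp Require Import all_boot all_order all_algebra.
Set Implicit Arguments. Unset Strict Implicit. Unset Printing Implicit Defensive.
Import Order.TTheory GRing.Theory Num.Theory.
Local Open Scope ring_scope.

Section DST.
Variable V : finType.

(* Directed paths are represented by their full vertex sequence
   [:: v0; v1; ...; vk]. *)
Definition is_simple_path (e : rel V) (r v : V) (p : seq V) : bool :=
  if p is x :: q then
    [&& x == r, path e x q, last x q == v & uniq p]
  else false.

(* All sequences over V of length at most #|V| (simple paths have at most
   #|V| vertices). *)
Definition short_seqs : seq (seq V) :=
  undup (flatten [seq [seq tval t | t : k.-tuple V] | k <- iota 0 #|V|.+1]).

Definition simple_paths (e : rel V) (r v : V) : seq (seq V) :=
  [seq p <- short_seqs | is_simple_path e r v p].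

Definition induced (e : rel V) (W : {set V}) : rel V :=
  [rel u w | [&& u \in W, w \in W & e u w]].

Definition reach_in (e : rel V) (W : {set V}) (a b : V) : bool :=
  [&& a \in W, b \in W & connect (induced e W) a b].

(* Feasibility of (x, f) for (LP-DST); f t P is the variable f^t_P. *)
Definition LP_DST_feasible (R : realFieldType) (e : rel V) (r : V)
    (K : {set V}) (x : V -> R) (f : V -> seq V -> R) : Prop :=
  [/\ forall t, t \in K -> \sum_(P <- simple_paths e r t) f t P = 1,
      forall v t, t \in K ->
        \sum_(P <- simple_paths e r t | v \in P) f t P <= x v,
      forall v, 0 <= x v <= 1 &
      forall t P, t \in K -> P \in simple_paths e r t -> 0 <= f t P <= 1].

End DST.

From HB Require Import structures.
From mathcomp Require Import all_boot all_order all_algebra.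
Import Order.TTheory GRing.Theory Num.Theory.
Set Implicit Arguments. Unset Strict Implicit. Unset Printing Implicit Defensive.
Local Open Scope ring_scope.

(* Fix a terminal t in EX and let s = sqrt n, so U is the set
   of vertices with x_v >= 1/s and every w in X_t has x_w < 1/s.
   (1) Every path P carrying positive flow f^t_P lies inside S, because
       0 < f^t_P <= sum of f^t over paths through v <= x_v for v in P.
   (2) Such a path cannot stay inside U (t is not reachable from r in
       D[U]); its last vertex w outside U then lies in U' = S \ U and the
       tail of P after w runs in D[U + w], so w belongs to X_t.
   (3) A union bound: the unit flow to t is covered by the paths through
       the vertices of X_t, each carrying at most x_w < 1/s, hence
       1 <= #|X_t| / s, i.e. s <= #|X_t|. *)

Section InducedPaths.
Variables (V : finType) (e : rel V).

Lemma path_induced (W : {set V}) (a : V) (q : seq V) :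
  a \in W -> all [in W] q -> path e a q -> path (induced e W) a q.
Proof.
elim: q a => [//|b q IH] a aW /= /andP[bW qW] /andP[eab pq].
by rewrite /induced /= aW bW eab IH.
Qed.

Lemma reach_in_path (W : {set V}) (a : V) (q : seq V) :
  all [in W] (a :: q) -> path e a q -> reach_in e W a (last a q).
Proof.
move=> /allP aqW pq; have inW v : v \in a :: q -> v \in W by apply: aqW.
rewrite /reach_in !inW ?mem_head ?mem_last //=.
apply/connectP; exists q => //; apply: path_induced; first exact/inW/mem_head.
- by apply/allP => v vq; apply: inW; rewrite inE vq orbT.
- exact: pq.
Qed.

(* Exit lemma: if a walk leaves U somewhere, then some vertex w of the walk
   outside U (namely the last one) reaches the end of the walk inside
   D[U + w]. *)
Lemma last_exit (U : {set V}) (a : V) (q : seq V) :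
  path e a q -> has [predC U] (a :: q) ->
  exists2 w, w \in a :: q & (w \notin U) && reach_in e (w |: U) w (last a q).
Proof.
elim: q a => [|b q IH] a /=.
  move=> _; rewrite orbF => aU; exists a; first exact: mem_head.
  by rewrite aU /reach_in setU11 connect0.
move=> /andP[eab pq] /orP[aU|hq]; last first.
  by have [w wq wP] := IH b pq hq; exists w => //; rewrite inE wq orbT.
have [hq|] := boolP (has [predC U] (b :: q)).
  by have [w wq wP] := IH b pq hq; exists w => //; rewrite inE wq orbT.
rewrite -all_predC => /allP qU; exists a; first exact: mem_head.
rewrite aU; apply: (@reach_in_path _ a (b :: q)); last by rewrite /= eab pq.
apply/allP => v; rewrite inE => /predU1P[->|vq]; first exact: setU11.
by rewrite inE (negPn (qU v vq)) orbT.
Qed.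

End InducedPaths.

Section LPFeasibility.
Variables (R : realFieldType) (V : finType) (e : rel V) (r : V).
Variables (K : {set V}) (x : V -> R) (f : V -> seq V -> R).
Hypothesis feas : LP_DST_feasible e r K x f.

Lemma flow_path_support (t : V) (P : seq V) (v : V) :
  t \in K -> P \in simple_paths e r t -> 0 < f t P -> v \in P -> 0 < x v.
Proof.
case: feas => _ cap _ fbd tK Pt fP vP; apply: lt_le_trans fP _.
apply: le_trans (cap v t tK); rewrite (big_rem P) //= vP lerDl.
rewrite big_seq_cond; apply: sumr_ge0 => Q /andP[/mem_rem Qt _].
by case/andP: (fbd t Q tK Qt).
Qed.

End LPFeasibility.

Lemma fractional_cover_bound (R : realDomainType) (T : finType)
    (ps : seq (seq T)) (g : seq T -> R) (X : {set T}) (b : R) :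
  (forall P, P \in ps -> 0 <= g P) ->
  (forall P, P \in ps -> 0 < g P -> exists2 w, w \in X & w \in P) ->
  (forall w, w \in X -> \sum_(P <- ps | w \in P) g P <= b) ->
  \sum_(P <- ps) g P <= b *+ #|X|.
Proof.
move=> g_ge0 hit load; rewrite -sumr_const.
apply: le_trans (_ : \sum_(w in X) \sum_(P <- ps | w \in P) g P <= _);
  last exact: ler_sum.
under [X in _ <= X]eq_bigr do rewrite big_mkcond.
rewrite exchange_big /= big_seq [X in _ <= X]big_seq; apply: ler_sum => P Pps.
have gP_ge0 w : 0 <= (if w \in P then g P else 0) by case: ifP => // _; auto.
have [gP0|gP] := leP (g P) 0.
  by apply: le_trans gP0 _; apply: sumr_ge0.
have [w wX wP] := hit P Pps gP.
by rewrite (bigD1 w) //= wP lerDl; apply: sumr_ge0.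
Qed.

Theorem claim1 (R : rcfType) (V : finType) (e : rel V) (c : V -> R)
    (r : V) (K : {set V}) (x : V -> R) (f : V -> seq V -> R) :
  LP_DST_feasible e r K x f ->
  let n := #|V| in
  let S := [set v | 0 < x v] in
  let U := [set v | (Num.sqrt (n%:R : R))^-1 <= x v] in
  let U' := S :\: U in
  let EX := [set t in K | ~~ reach_in e U r t] in
  forall t, t \in EX ->
    let X_t := [set w in U' | reach_in e (w |: U) w t] in
    Num.sqrt (n%:R : R) <= (#|X_t|)%:R.
Proof.
move=> feas n S U U' EX t /setIdP[tK not_rU]; cbv zeta.
set X := [set w in U' | _].
case: (feas) => unit_flow cap _ fbd.
set s := Num.sqrt (n%:R : R).
have s_gt0 : 0 < s by rewrite sqrtr_gt0 ltr0n; apply/card_gt0P; exists r.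
have hit P : P \in simple_paths e r t -> 0 < f t P -> exists2 w, w \in X & w \in P.
  move=> Pt fP; have PS := flow_path_support feas tK Pt fP.
  move: (Pt); rewrite mem_filter => /andP[+ _].
  case: P {Pt fP} PS => [//|a q] PS /and4P[/eqP ar pq /eqP lq _].
  have [|w wP /andP[wU wt]] := @last_exit _ e U a q pq.
    apply: contraR not_rU; rewrite -all_predC -ar -lq => /allP aqU.
    by apply: reach_in_path pq; apply/allP => v /aqU /negPn.
  by exists w => //; rewrite inE -lq wt andbT inE wU inE PS.
have X_small w : w \in X -> x w <= s^-1.
  by rewrite !inE => /andP[/andP[+ _] _]; rewrite -ltNge => /ltW.
have cover : 1 <= s^-1 *+ #|X|.
  rewrite -(unit_flow t tK); apply: fractional_cover_bound => //.
  - by move=> P Pt; case/andP: (fbd t P tK Pt).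
  - by move=> w wX; apply: le_trans (cap w t tK) (X_small w wX).
have -> : (#|X|%:R : R) = s^-1 *+ #|X| * s.
  by rewrite mulrnAl mulVf ?gt_eqF.
by rewrite -{1}(mul1r s) ler_pM2r.
Qed.
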